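(* Let $\mathcal N=(P,T,F,In,\Upsilon)$ be a safe Petri net with transits and let $\varphi$ be a Flow-LTL formula containing $n\in\mathbb N$ flow subformulas $\mathbb A\,\psi_1,\dots,\mathbb A\,\psi_n$. Then the P/T Petri net with inhibitor arcs $\mathcal N^{>}$ constructed from $\mathcal N$ and $\varphi$ (as described in the context) has $O(|\mathcal N|\cdot n+|\mathcal N|)$ places and $O(|\mathcal N|^3\cdot n+|\mathcal N|)$ transitions.
   Context: A safe Petri net with transits is $\mathcal N=(P,T,F,In,\Upsilon)$ where $(P,T,F,In)$ is a safe Petri net (places $P$, transitions $T$, flow relation $F\subseteq(P\times T)\cup(T\times P)$, initial marking $In\subseteq P$; every reachable marking has at most one token per place) and, for each $t\in T$, $\Upsilon(t)\subseteq({}^\bullet t\cup\{\rhd\})\times t^\bullet$ is the transit relation of $t$ ($p\,\Upsilon(t)\,q$: the data flow in $p$ moves via $t$ to $q$; $\rhd\,\Upsilon(t)\,q$: a new data flow starts in $q$). $|\mathcal N|$ denotes the size of $\mathcal N$. A Flow-LTL formula is generated by $\varphi::=\psi\mid\varphi_1\wedge\varphi_2\mid\varphi_1\vee\varphi_2\mid\psi\to\varphi\mid\mathbb A\,\psi$ with $\psi$ an LTL formula over atomic propositions $P\cup T$; subformulas $\mathbb A\,\psi$ are flow subformulas. An inhibitor arc from place $p$ to transition $t$ enables $t$ only if $p$ is empty. Construction of $\mathcal N^{>}=(P^{>},T^{>},F^{>},F_I^{>},In^{>})$ with labelling $\lambda$ to $P\cup T$: (o) it contains all places, transitions and flow arcs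 of $\mathcal N$ (labelled by themselves) plus a fresh place $act_o$. For each $i\in\{1,\dots,n\}$: (s1) a copy $p_i$ of every $p\in P$ (labelled $p$); (s2) a place $\iota_i$; (a) an activation place $act_{t,i}$ for each $t\in T$; (s3) for each $t\in T$ and each $(\rhd,q)\in\Upsilon(t)$ a transition labelled $t$ with arcs $\iota_i\to$ it $\to q_i$; (s4) for each $t\in T$ and each $(p,q)\in\Upsilon(t)$ a transition labelled $t$ with arcs $p_i\to$ it $\to q_i$; (s5) for each $t\in T$ a skip transition $t_{skip_i}$ labelled $t$ with an inhibitor arc from $p_i$ for every $p\in{}^\bullet t$. Activation: (mO) each original $t\in T$ has arcs $act_o\to t\to act_{t,1}$; (mSi) each transition of subnet $i<n$ labelled $t$ has arcs $act_{t,i}\to$ it $\to act_{t,i+1}$; (mSn) each transition of subnet $n$ labelled $t$ has arcs $act_{t,n}\to$ it $\to act_o$. Initial marking: $In^{>}=\{act_o\}\cup\{\iota_i\mid 1\le i\le n\}\cup In$. The net consists of exactly these places, transitions and arcs. *)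

From mathcomp Require Import all_boot.
Set Implicit Arguments. Unset Strict Implicit. Unset Printing Implicit Defensive.

Record PNT := mkPNT {
  pl : finType;
  tr : finType;
  flowPT : pl -> tr -> bool;
  flowTP : tr -> pl -> bool;
  init : {set pl};
  ups : tr -> {set (option pl * pl)}    (* Upsilon(t); None stands for |> *)
}.

Definition ups_wf (N : PNT) : Prop :=
  forall (t : tr N) (p : option (pl N)) (q : pl N), (p, q) \in @ups N t ->
    flowTP t q /\ (if p is Some p' then flowPT p' t else True).

Definition marking (N : PNT) := pl N -> nat.
Definition enabled (N : PNT) (M : marking N) (t : tr N) : Prop :=
  forall p, flowPT p t -> 1 <= M p.
Definition fire (N : PNT) (M : marking N) (t : tr N) : marking N :=
  fun p => M p - flowPT p t + flowTP t p.
Definition init_marking (N : PNT) : marking N := fun p => nat_of_bool (p \in @init N).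
Inductive reachable (N : PNT) : marking N -> Prop :=
| reach_init : reachable (@init_marking N)
| reach_fire M t : reachable M -> enabled M t -> reachable (fire M t).
Definition safe (N : PNT) : Prop :=
  forall M : marking N, reachable M -> forall p, M p <= 1.

Definition size_net (N : PNT) : nat := #|pl N| + #|tr N|.

Inductive LTL (A : Type) :=
| LTrue | LAtom of A | LNot of LTL A | LAnd of LTL A & LTL A | LOr of LTL A & LTL A
| LNext of LTL A | LUntil of LTL A & LTL A
| LEvent of LTL A | LAlways of LTL A.

Inductive FlowLTL (A : Type) :=
| FRun of LTL A
| FAnd of FlowLTL A & FlowLTL A
| FOr of FlowLTL A & FlowLTL A
| FImp of LTL A & FlowLTL A
| FAll of LTL A.

Fixpoint nflow (A : Type) (phi : FlowLTL A) : nat :=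
  match phi with
  | FRun _ => 0
  | FAnd a b | FOr a b => nflow a + nflow b
  | FImp _ b => nflow b
  | FAll _ => 1
  end.

Record PTI (P T : Type) := mkPTI {
  gpl : finType;
  gtr : finType;
  gplaces : {set gpl};
  gtrans : {set gtr};
  gflowPT : gpl -> gtr -> bool;
  gflowTP : gtr -> gpl -> bool;
  ginhib : gpl -> gtr -> bool;
  ginit : {set gpl};
  glab_pl : gpl -> option P;           (* None: unlabelled (activation places) *)
  glab_tr : gtr -> T
}.

Section Construction.
Variables (N : PNT) (n : nat).
Let P := pl N. Let T := tr N.

(* places: p | act_o | p_i | iota_i | act_{t,i}   (i : 'I_n stands for i+1) *)
Definition Gpl : finType := ((((P + unit) + ('I_n * P)) + 'I_n) + (T * 'I_n))%type.
(* transitions: original t | subnet transit (i,t,p,q) with p=None for |> | skip (i,t) *)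
Definition Gtr : finType := ((T + ('I_n * T * option P * P)) + ('I_n * T))%type.

Definition g_trans : {set Gtr} :=
  [set x | match x with
           | inl (inr (i, t, p, q)) => (p, q) \in @ups N t
           | _ => true end].

Definition g_orig (x : Gpl) : option P :=
  if x is inl (inl (inl (inl p))) then Some p else None.
Definition g_acto (x : Gpl) : bool :=
  if x is inl (inl (inl (inr _))) then true else false.
Definition g_copy (x : Gpl) : option ('I_n * P) :=
  if x is inl (inl (inr ip)) then Some ip else None.
Definition g_iota (x : Gpl) : option 'I_n :=
  if x is inl (inr i) then Some i else None.
Definition g_act (x : Gpl) : option (T * 'I_n) :=
  if x is inr ti then Some ti else None.

Definition g_sub (y : Gtr) : option ('I_n * T) :=
  match y with
  | inl (inl _) => None
  | inl (inr (i, t, _, _)) => Some (i, t)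
  | inr (i, t) => Some (i, t)
  end.

Definition g_flowPT (x : Gpl) (y : Gtr) : bool :=
  match y with
  | inl (inl t) =>
      (if g_orig x is Some p then flowPT p t else false) || g_acto x
  | inl (inr (i, t, op, q)) =>
      match op with
      | None => g_iota x == Some i
      | Some p => g_copy x == Some (i, p)
      end
      || (g_act x == Some (t, i))
  | inr (i, t) => g_act x == Some (t, i)
  end.

Definition g_flowTP (y : Gtr) (x : Gpl) : bool :=
  match y with
  | inl (inl t) =>
      (if g_orig x is Some p then flowTP t p else false)
      || (if g_act x is Some (t', j) then (t' == t) && (nat_of_ord j == 0) else false)
  | inl (inr (i, t, _, q)) =>
      (g_copy x == Some (i, q))
      || (if g_act x is Some (t', j) then (t' == t) && (nat_of_ord j == i.+1) else false)
      || (g_acto x && (i.+1 == n))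
  | inr (i, t) =>
      (if g_act x is Some (t', j) then (t' == t) && (nat_of_ord j == i.+1) else false)
      || (g_acto x && (i.+1 == n))
  end.

Definition g_inhib (x : Gpl) (y : Gtr) : bool :=
  match y, g_copy x with
  | inr (i, t), Some (j, p) => (i == j) && flowPT p t
  | _, _ => false
  end.

Definition g_init : {set Gpl} :=
  [set x | g_acto x || (g_iota x != None)
           || (if g_orig x is Some p then p \in @init N else false)].

Definition g_lab_pl (x : Gpl) : option P :=
  match g_orig x, g_copy x with
  | Some p, _ => Some p
  | _, Some (_, p) => Some p
  | _, _ => None
  end.

Definition g_lab_tr (y : Gtr) : T :=
  match y with
  | inl (inl t) => t
  | inl (inr (_, t, _, _)) => t
  | inr (_, t) => t
  end.

Definition construct_gt : PTI P T :=
  @mkPTI P T Gpl Gtr setT g_trans g_flowPT g_flowTP g_inhib g_init g_lab_pl g_lab_tr.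

End Construction.

Definition net_gt (N : PNT) (phi : FlowLTL (pl N + tr N)) : PTI (pl N) (tr N) :=
  construct_gt N (nflow phi).

From mathcomp Require Import all_boot.
From mathcomp Require Import zify.

(* The places of N^> are counted exactly: |P| originals, act_o, n|P| copies,
   n places iota_i and n|T| activation places.  The transitions are bounded by
   all candidate ones: |T| originals, n|T|(|P|+1)|P| transit transitions
   (one per i, t and pair (p, q) in (P + {|>}) x P, whether or not it is in
   Upsilon(t)) and n|T| skip transitions.  Since |P|, |T| <= |N| and |N| >= 1,
   both counts are within a factor 3 of the claimed bounds. *)

Lemma card_Gpl (N : PNT) (n : nat) :
  #|Gpl N n| = #|pl N| + 1 + n * #|pl N| + n + #|tr N| * n.
Proof. by rewrite /Gpl !card_sum !card_prod card_unit card_ord. Qed.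

Lemma card_Gtr (N : PNT) (n : nat) :
  #|Gtr N n| = #|tr N| + n * #|tr N| * #|pl N|.+1 * #|pl N| + n * #|tr N|.
Proof. by rewrite /Gtr !card_sum !card_prod card_option card_ord. Qed.

Lemma card_places_net_gt (N : PNT) (phi : FlowLTL (pl N + tr N)) :
  #|gplaces (net_gt phi)| = #|Gpl N (nflow phi)|.
Proof. exact: cardsT. Qed.

Lemma card_trans_net_gt_le (N : PNT) (phi : FlowLTL (pl N + tr N)) :
  #|gtrans (net_gt phi)| <= #|Gtr N (nflow phi)|.
Proof. exact: max_card. Qed.

Lemma places_count_le (a b n : nat) : 0 < a + b ->
  a + 1 + n * a + n + b * n <= 3 * ((a + b) * n + (a + b)).
Proof. by move=> s_gt0; nia. Qed.

Lemma trans_count_le (a b n : nat) :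
  b + n * b * a.+1 * a + n * b <= 3 * ((a + b) ^ 3 * n + (a + b)).
Proof.
have transit_le : b * a.+1 * a <= (a + b) ^ 3.
  by rewrite !expnS expn0; case: a => [|a]; nia.
have cube_ge : a + b <= (a + b) ^ 3.
  by case: (a + b) => // s; rewrite -{1}(expn1 s.+1) leq_pexp2l.
have subnets_le : n * (b * a.+1 * a) + n * b <= 2 * ((a + b) ^ 3 * n) by nia.
nia.
Qed.

Theorem lemma1 :
  exists c k : nat,
    forall (N : PNT) (phi : FlowLTL (pl N + tr N)),
      ups_wf N -> safe N -> k <= size_net N ->
      let n := nflow phi in
      #|gplaces (net_gt phi)| <= c * (size_net N * n + size_net N) /\
      #|gtrans (net_gt phi)| <= c * (size_net N ^ 3 * n + size_net N).
Proof.
exists 3, 1 => N phi _ _ N_gt0 n; split.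
  by rewrite card_places_net_gt card_Gpl places_count_le.
apply: leq_trans (card_trans_net_gt_le N phi) _.
by rewrite card_Gtr trans_count_le.
Qed.
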